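(* Let $\sigma(x,y)=(x\rightharpoonup y,x\leftharpoonup y)$ be a left-non-degenerate involutive quiver-theoretic Yang--Baxter map on a quiver $\mathscr{A}$ over $\Lambda$. For $x,y\in\mathscr{A}$ with $\mathfrak{s}(x)=\mathfrak{s}(y)$ set $x\star y:=(x\rightharpoonup\cdot)^{-1}(y)$. Then $(\mathscr{A},\star)$ is a left-non-degenerate weak RC-system, and $x\star y$ is defined whenever $\mathfrak{s}(x)=\mathfrak{s}(y)$.
   Context: A quiver over $\Lambda$ has source/target maps $\mathfrak{s},\mathfrak{t}$; $Q(\lambda,\Lambda)$ denotes arrows with source $\lambda$, $Q(\Lambda,\mu)$ arrows with target $\mu$. A quiver-theoretic Yang--Baxter map is a source/target-preserving map $\sigma$ on composable pairs $\mathscr{A}\otimes\mathscr{A}$ satisfying $(\sigma\otimes\mathrm{id})(\mathrm{id}\otimes\sigma)(\sigma\otimes\mathrm{id})=(\mathrm{id}\otimes\sigma)(\sigma\otimes\mathrm{id})(\mathrm{id}\otimes\sigma)$; involutive: $\sigma^2=\mathrm{id}$; left-non-degenerate: each $x\rightharpoonup\cdot\colon\mathscr{A}(\mathfrak{t}(x),\Lambda)\to\mathscr{A}(\mathfrak{s}(x),\Lambda)$ is bijective. A weak RC-system $(Q,\star)$ is a quiver $Q$ with a partially defined binary operation $\star$ such that: $x\star y$ is defined only if $\mathfrak{s}(x)=\mathfrak{s}(y)$; whenever $x\star y$ is defined, $y\star x$ is defined, $\mathfrak{s}(x\star y)=\mathfrak{t}(x)$, $\mathfrak{s}(y\star x)=\mathfrak{t}(y)$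 and $\mathfrak{t}(x\star y)=\mathfrak{t}(y\star x)$; and whenever $x\star y$, $x\star z$, $(x\star y)\star(x\star z)$ are defined, then $y\star z$ and $(y\star x)\star(y\star z)$ are defined and $(x\star y)\star(x\star z)=(y\star x)\star(y\star z)$ (RC-law). It is left-non-degenerate if every map $x\star\cdot\colon Q(\mathfrak{s}(x),\Lambda)\to Q(\mathfrak{t}(x),\Lambda)$ is a bijection. *)

From Stdlib Require Import ClassicalEpsilon.

Set Implicit Arguments.

(* A quiver-theoretic map sigma on composable pairs is given by its two
   components  sigma(x,y) = (lact x y, ract x y)  (only their values on
   composable pairs matter). *)

Definition composable (Lam A : Type) (s t : A -> Lam) (x y : A) : Prop :=
  t x = s y.

Definition preserves_st (Lam A : Type) (s t : A -> Lam)
  (lact ract : A -> A -> A) : Prop :=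
  forall x y, t x = s y ->
    s (lact x y) = s x /\ t (lact x y) = s (ract x y) /\ t (ract x y) = t y.

(* (sigma (x) id)(id (x) sigma)(sigma (x) id) = (id (x) sigma)(sigma (x) id)(id (x) sigma)
   on composable triples. *)
Definition braid_relation (Lam A : Type) (s t : A -> Lam)
  (lact ract : A -> A -> A) : Prop :=
  forall x y z, t x = s y -> t y = s z ->
    let a := lact x y in
    let b := lact (ract x y) z in
    let c := ract (ract x y) z in
    let a' := lact y z in
    let b' := ract y z in
    (lact a b, ract a b, c)
    = (lact x a', lact (ract x a') b', ract (ract x a') b').

Definition quiver_YB_map (Lam A : Type) (s t : A -> Lam)
  (lact ract : A -> A -> A) : Prop :=
  preserves_st s t lact ract /\ braid_relation s t lact ract.

Definition involutive_map (Lam A : Type) (s t : A -> Lam)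
  (lact ract : A -> A -> A) : Prop :=
  forall x y, t x = s y ->
    lact (lact x y) (ract x y) = x /\ ract (lact x y) (ract x y) = y.

Definition left_nondegenerate_map (Lam A : Type) (s t : A -> Lam)
  (lact : A -> A -> A) : Prop :=
  forall x,
    (forall y1 y2, s y1 = t x -> s y2 = t x -> lact x y1 = lact x y2 -> y1 = y2) /\
    (forall z, s z = s x -> exists y, s y = t x /\ lact x y = z).

(* Weak RC-system: partial binary operation op (None = undefined). *)
Definition weak_RC_system (Lam A : Type) (s t : A -> Lam)
  (op : A -> A -> option A) : Prop :=
  (forall x y u, op x y = Some u -> s x = s y) /\
  (forall x y u, op x y = Some u ->
     exists v, op y x = Some v /\ s u = t x /\ s v = t y /\ t u = t v) /\
  (forall x y z a b c, op x y = Some a -> op x z = Some b -> op a b = Some c ->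
     exists e d, op y x = Some e /\ op y z = Some d /\ op e d = Some c).

Definition left_nondegenerate_RC (Lam A : Type) (s t : A -> Lam)
  (op : A -> A -> option A) : Prop :=
  forall x,
    (forall y, s y = s x -> exists z, op x y = Some z /\ s z = t x) /\
    (forall y1 y2 z, s y1 = s x -> s y2 = s x ->
        op x y1 = Some z -> op x y2 = Some z -> y1 = y2) /\
    (forall w, s w = t x -> exists y, s y = s x /\ op x y = Some w).

Definition star (Lam A : Type) (s t : A -> Lam) (lact : A -> A -> A)
  (x y : A) : option A :=
  match excluded_middle_informative
          (s x = s y /\ exists z, s z = t x /\ lact x z = y) with
  | left H =>
      Some (proj1_sig (constructive_indefinite_description _ (proj2 H)))
  | right _ => None
  end.

(** The operation [x ⋆ y] inverts [x ⇀ ·], so [x ⋆ y = z] just says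
    [s z = t x] and [x ⇀ z = y].  Involutivity then gives
    [y ⋆ x = x ↼ (x ⋆ y)], and the first component of the braid relation at
    the composable triple [(x, a, c)], with [a = x ⋆ y] and [c = a ⋆ (x ⋆ z)],
    reads [(x ⇀ a) ⇀ ((x ↼ a) ⇀ c) = x ⇀ (a ⇀ c)], i.e.
    [y ⇀ ((x ↼ a) ⇀ c) = z]: hence [y ⋆ z = (x ↼ a) ⇀ c] and
    [(y ⋆ x) ⋆ (y ⋆ z) = c], which is the RC-law. *)

From Stdlib Require Import ClassicalEpsilon.

Section StarOfYangBaxterMap.

Variables (Lam A : Type) (s t : A -> Lam) (lact ract : A -> A -> A).

Lemma star_Some_inv x y z :
  star s t lact x y = Some z -> s x = s y /\ s z = t x /\ lact x z = y.
Proof.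
  unfold star.
  destruct excluded_middle_informative as [[Hxy Hex] | _]; [| discriminate].
  destruct constructive_indefinite_description as [w [Hw Hxw]]; simpl.
  intros E; injection E as <-; auto.
Qed.

Hypothesis lact_nondeg : left_nondegenerate_map s t lact.

Lemma star_Some x y z :
  s x = s y -> s z = t x -> lact x z = y -> star s t lact x y = Some z.
Proof.
  intros Hxy Hz Hxz. unfold star.
  destruct excluded_middle_informative as [H | H].
  - destruct constructive_indefinite_description as [w [Hw Hxw]]; simpl.
    f_equal. apply (proj1 (lact_nondeg x)); congruence.
  - exfalso. apply H. split; [exact Hxy | exists z; auto].
Qed.

Lemma star_defined x y : s x = s y -> exists z, star s t lact x y = Some z.
Proof.
  intros Hxy. destruct (proj2 (lact_nondeg x) y (eq_sym Hxy)) as [z [Hz Hxz]].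
  exists z. apply star_Some; auto.
Qed.

Hypothesis lact_ract_st : preserves_st s t lact ract.

Lemma star_lact x w : s w = t x -> star s t lact x (lact x w) = Some w.
Proof.
  intros Hw. destruct (lact_ract_st x w (eq_sym Hw)) as [Hs _].
  apply star_Some; auto.
Qed.

Hypothesis lact_ract_invol : involutive_map s t lact ract.

Lemma star_swap x y u :
  star s t lact x y = Some u -> star s t lact y x = Some (ract x u).
Proof.
  intros Hu. apply star_Some_inv in Hu as [Hxy [Hu <-]].
  destruct (lact_ract_st x u (eq_sym Hu)) as [Hs [Hm _]].
  destruct (lact_ract_invol x u (eq_sym Hu)) as [Hx _].
  apply star_Some; auto.
Qed.

Hypothesis lact_ract_braid : braid_relation s t lact ract.

Lemma lact_braid x a c :
  t x = s a -> t a = s c ->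
  lact (lact x a) (lact (ract x a) c) = lact x (lact a c).
Proof.
  intros Hxa Hac. pose proof (lact_ract_braid x a c Hxa Hac) as B; simpl in B.
  injection B; auto.
Qed.

Lemma star_RC_law x y z a b c :
  star s t lact x y = Some a -> star s t lact x z = Some b ->
  star s t lact a b = Some c ->
  star s t lact y z = Some (lact (ract x a) c) /\
  star s t lact (ract x a) (lact (ract x a) c) = Some c.
Proof.
  intros Ha Hb Hc.
  apply star_Some_inv in Ha as [Hxy [Ha Hxa]].
  apply star_Some_inv in Hb as [Hxz [Hb Hxb]].
  apply star_Some_inv in Hc as [Hab [Hc Hac]].
  destruct (lact_ract_st x a (eq_sym Ha)) as [Hs [Hm Ht]].
  destruct (lact_ract_st (ract x a) c (eq_trans Ht (eq_sym Hc))) as [Hs' _].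
  split.
  - apply star_Some; try congruence.
    rewrite <- Hxa, <- Hxb, <- Hac. apply lact_braid; congruence.
  - apply star_lact; congruence.
Qed.

End StarOfYangBaxterMap.

Theorem proposition5p1 (Lam A : Type) (s t : A -> Lam)
  (lact ract : A -> A -> A) :
  quiver_YB_map s t lact ract ->
  involutive_map s t lact ract ->
  left_nondegenerate_map s t lact ->
  weak_RC_system s t (star s t lact) /\
  left_nondegenerate_RC s t (star s t lact) /\
  (forall x y, s x = s y -> exists z, star s t lact x y = Some z).
Proof.
  intros [PS BR] INV ND.
  split; [split; [| split] | split].
  - intros x y u Hu. apply star_Some_inv in Hu; tauto.
  - intros x y u Hu. exists (ract x u). split; [apply star_swap; auto |].
    apply star_Some_inv in Hu as [_ [Hu <-]].
    destruct (PS x u (eq_sym Hu)) as [_ [Hm Ht]]. auto.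
  - intros x y z a b c Ha Hb Hc. exists (ract x a), (lact (ract x a) c).
    split; [apply star_swap; auto | eapply star_RC_law; eauto].
  - intros x. split; [| split].
    + intros y Hy. destruct (star_defined _ _ s t lact ND x y) as [z Hz]; [auto |].
      exists z. split; [exact Hz | apply star_Some_inv in Hz; tauto].
    + intros y1 y2 z _ _ H1 H2.
      apply star_Some_inv in H1 as [_ [_ <-]].
      apply star_Some_inv in H2 as [_ [_ <-]].
      reflexivity.
    + intros w Hw. exists (lact x w).
      split; [apply (PS x w (eq_sym Hw)) | eapply star_lact; eauto].
  - intros x y Hxy. apply star_defined; auto.
Qed.
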